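(* Let $(X,d)$ be a metric space with betweenness exponent $t_0=t_0(d)$, and let $W\subseteq X$. Then for every $\varepsilon>0$, $$\mathcal M^*_{2^{1/t_0}\varepsilon}(W)\le \hat{\mathcal N}^X_\varepsilon(W)\le \hat{\mathcal N}_\varepsilon(W)\le \hat{\mathcal M}_\varepsilon(W)\le \mathcal M^*_\varepsilon(W).$$
   Context: Closed balls: $B(c,r)=\{x\in X:d(x,c)\le r\}$. A set $C\subseteq X$ is an $\varepsilon$-net for $W\subseteq X$ if $W\subseteq\bigcup_{c\in C}B(c,\varepsilon)$. A set $A\subseteq X$ is $\varepsilon$-distinguishable if $d(x,y)>\varepsilon$ for all distinct $x,y\in A$. For $W,A\subseteq X$: $\hat{\mathcal N}^A_\varepsilon(W)$ is the minimal cardinality of an $\varepsilon$-net $C$ for $W$ with $C\subseteq A$, and $\hat{\mathcal N}_\varepsilon(W):=\hat{\mathcal N}^W_\varepsilon(W)$. A set $A$ is maximal $\varepsilon$-distinguishable with respect to $W$ if $A\subseteq W$ is $\varepsilon$-distinguishable and no $\varepsilon$-distinguishable $B\subseteq W$ strictly contains $A$. $\hat{\mathcal M}_\varepsilon(W)$ is the smallest cardinality of a maximal $\varepsilon$-distinguishable set with respect to $W$. $\mathcal M^*_\varepsilon(W)$ is the smallest cardinal number that is $\ge \operatorname{card}(A)$ for every $\varepsilon$-distinguishable $A\subseteq W$. The betweenness exponent $t_0(d)\in[1,\infty]$ is the supremum of all $t>0$ for which $(x,y)\mapsto(d(x,y))^t$ is a metric on $X$; $t_0(d)=\infty$ iff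 $d$ is an ultrametric. Convention: $2^{1/\infty}=1$. *)

From Stdlib Require Import Reals.
Open Scope R_scope.

Definition is_metric {X : Type} (d : X -> X -> R) : Prop :=
  (forall x y, 0 <= d x y) /\
  (forall x y, d x y = 0 <-> x = y) /\
  (forall x y, d x y = d y x) /\
  (forall x y z, d x z <= d x y + d y z).

Definition rpow (r t : R) : R :=
  match Req_EM_T r 0 with left _ => 0 | right _ => Rpower r t end.

Definition powd {X : Type} (d : X -> X -> R) (t : R) : X -> X -> R :=
  fun x y => rpow (d x y) t.

Definition metric_exponents {X : Type} (d : X -> X -> R) : R -> Prop :=
  fun t => 0 < t /\ is_metric (powd d t).

(** t0 is the betweenness exponent of d: [Some t] means t0 = t (finite
    supremum), [None] means t0 = infinity (the set is unbounded). *)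
Definition betweenness_exponent {X : Type} (d : X -> X -> R) (t0 : option R) : Prop :=
  match t0 with
  | Some t => is_lub (metric_exponents d) t
  | None => ~ bound (metric_exponents d)
  end.

(** 2^(1/t0), with the convention 2^(1/infinity) = 1. *)
Definition exp_factor (t0 : option R) : R :=
  match t0 with Some t => Rpower 2 (/ t) | None => 1 end.

Definition subset {X : Type} (A B : X -> Prop) : Prop := forall x, A x -> B x.

Definition ball {X : Type} (d : X -> X -> R) (c : X) (r : R) : X -> Prop :=
  fun x => d x c <= r.

Definition is_net {X : Type} (d : X -> X -> R) (eps : R) (W C : X -> Prop) : Prop :=
  forall w, W w -> exists c, C c /\ ball d c eps w.

Definition distinguishable {X : Type} (d : X -> X -> R) (eps : R) (A : X -> Prop) : Prop :=
  forall x y, A x -> A y -> x <> y -> eps < d x y.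

Definition maximal_disting {X : Type} (d : X -> X -> R) (eps : R) (W A : X -> Prop) : Prop :=
  subset A W /\ distinguishable d eps A /\
  ~ (exists B, subset B W /\ distinguishable d eps B /\ subset A B /\
               exists x, B x /\ ~ A x).

(** Candidate classes whose (minimal / supremal) cardinalities define the
    quantities of the paper. *)
(* eps-nets C for W with C subset of A: N^A_eps(W) = min card of these *)
Definition net_cands {X : Type} (d : X -> X -> R) (eps : R) (W A : X -> Prop)
  : (X -> Prop) -> Prop :=
  fun C => subset C A /\ is_net d eps W C.
(* eps-distinguishable subsets of W: M*_eps(W) = sup card of these *)
Definition disting_cands {X : Type} (d : X -> X -> R) (eps : R) (W : X -> Prop)
  : (X -> Prop) -> Prop :=
  fun A => subset A W /\ distinguishable d eps A.

Definition card_le {X : Type} (A B : X -> Prop) : Prop :=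
  exists f : X -> X, (forall x, A x -> B (f x)) /\
    (forall x y, A x -> A y -> f x = f y -> x = y).

(** Comparisons between minima / suprema of cardinalities of classes
    F, G of subsets of X (expressed without a cardinal type). *)
(* min_{A in F} |A| <= min_{B in G} |B| *)
Definition cmin_le_cmin {X : Type} (F G : (X -> Prop) -> Prop) : Prop :=
  forall B, G B -> exists A, F A /\ card_le A B.
(* sup_{A in F} |A| <= min_{B in G} |B| *)
Definition csup_le_cmin {X : Type} (F G : (X -> Prop) -> Prop) : Prop :=
  forall A B, F A -> G B -> card_le A B.
(* min_{A in F} |A| (exists) <= sup_{B in G} |B|, i.e. |A| <= every
   cardinal (represented by a subset Z of X) bounding all |B|, B in G. *)
Definition cmin_le_csup {X : Type} (F G : (X -> Prop) -> Prop) : Prop :=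
  exists A, F A /\
    forall Z : X -> Prop, (forall B, G B -> card_le B Z) -> card_le A Z.

From Stdlib Require Import Reals Lra Classical ClassicalEpsilon FunctionalExtensionality.
From mathcomp Require classical_sets.
Open Scope R_scope.

(* The two middle inequalities are witnessed by a set itself: an eps-net
   contained in W is in particular a net with centers in X, and a maximal
   eps-distinguishable subset of W is an eps-net of W (a point of W far from
   all of it could be added).  The last inequality needs the existence of a
   maximal eps-distinguishable set, which is Zorn's lemma (chains of
   distinguishable sets have distinguishable unions).

   The first inequality is a packing/covering comparison: if any two distinct
   points of a common eps-ball are at distance at most s, then sending each
   point of an s-distinguishable set to the center of a net ball containing
   it is injective.  The analytic heart is the bound s = 2^{1/t0} eps: for
   each exponent t with d^t a metric, d(a,b)^t <= d(a,c)^t + d(c,b)^t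
   <= 2 eps^t, i.e. t * ln (d(a,b)/eps) <= ln 2; when d(a,b) > eps this
   bounds every such t, hence their supremum t0, by ln 2 / ln (d(a,b)/eps). *)

Lemma card_le_refl {X : Type} (A : X -> Prop) : card_le A A.
Proof. exists (fun x => x); split; auto. Qed.

Section MaximalDistinguishable.

Variables (X : Type) (d : X -> X -> R) (eps : R) (W : X -> Prop).

Lemma maximal_disting_exists : exists A, maximal_disting d eps W A.
Proof.
  destruct (@classical_sets.Zorn_bigcup X (disting_cands d eps W))
    as [A [[AW AD] Amax]].
  - intros F FP Ftot. split.
    + intros x [B FB Bx]. exact (proj1 (FP B FB) x Bx).
    + (* two points of the union lie in a common member of the chain *)
      intros x y [B1 F1 B1x] [B2 F2 B2y] nxy.
      destruct (Ftot B1 B2 F1 F2) as [B12 | B21].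
      * exact (proj2 (FP B2 F2) x y (B12 x B1x) B2y nxy).
      * exact (proj2 (FP B1 F1) x y B1x (B21 y B2y) nxy).
  - exists A; repeat split; auto.
    intros [B [BW [BD [AB [x [Bx nAx]]]]]].
    apply (Amax B); [split; [exact AB | intro BA; exact (nAx (BA x Bx))] |].
    split; assumption.
Qed.

Lemma maximal_disting_net (A : X -> Prop) :
  is_metric d -> 0 <= eps -> maximal_disting d eps W A -> is_net d eps W A.
Proof.
  intros [_ [dzero [dsym _]]] eps_ge0 [AW [AD Amax]] w Ww.
  apply NNPP; intro far.
  assert (Hfar : forall c, A c -> eps < d w c).
  { intros c Ac. apply Rnot_le_lt; intro Hle. apply far; exists c; split; auto. }
  assert (nAw : ~ A w).
  { intro Aw. pose proof (Hfar w Aw) as Hww.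
    rewrite (proj2 (dzero w w) eq_refl) in Hww. lra. }
  apply Amax. exists (fun x => A x \/ x = w). repeat split.
  - intros x [Ax | ->]; auto.
  - intros x y [Ax | ->] [Ay | ->] nxy.
    + exact (AD x y Ax Ay nxy).
    + rewrite dsym; exact (Hfar x Ax).
    + exact (Hfar y Ay).
    + congruence.
  - intros x Ax; left; exact Ax.
  - exists w; split; [right; reflexivity | exact nAw].
Qed.

End MaximalDistinguishable.

(* Packing versus covering: if two distinct points in a common r-ball are at
   distance at most s, every s-distinguishable subset of W injects into every
   r-net of W, by choosing for each point a center covering it. *)
Lemma disting_injects_into_net {X : Type} (d : X -> X -> R) (r s : R)
    (W A C : X -> Prop) :
  (forall a b c, d a c <= r -> d b c <= r -> a <> b -> d a b <= s) ->
  subset A W -> distinguishable d s A -> is_net d r W C -> card_le A C.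
Proof.
  intros ball_diam AW AD Cnet.
  destruct (choice (fun a c => A a -> C c /\ ball d c r a)) as [f Hf].
  { intros a. destruct (classic (A a)) as [Aa | nAa].
    - destruct (Cnet a (AW a Aa)) as [c Hc]. exists c; auto.
    - exists a; intro Aa; contradiction. }
  exists f; split; [intros a Aa; apply Hf, Aa |].
  intros a b Aa Ab fab. apply NNPP; intro nab.
  destruct (Hf a Aa) as [_ Ba]; destruct (Hf b Ab) as [_ Bb].
  unfold ball in Ba, Bb; rewrite fab in Ba.
  pose proof (ball_diam a b (f b) Ba Bb nab).
  pose proof (AD a b Aa Ab nab). lra.
Qed.

Lemma rpow_le_Rpower (x eps t : R) :
  0 <= x -> x <= eps -> 0 < eps -> 0 < t -> rpow x t <= Rpower eps t.
Proof.
  intros x_ge0 x_le He Ht. unfold rpow. destruct (Req_EM_T x 0).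
  - left; apply exp_pos.
  - apply Rle_Rpower_l; lra.
Qed.

Lemma metric_exponent_one {X : Type} (d : X -> X -> R) :
  is_metric d -> metric_exponents d 1.
Proof.
  intros Hm. split; [lra |].
  replace (powd d 1) with d; [exact Hm |].
  apply functional_extensionality; intro x; apply functional_extensionality; intro y.
  unfold powd, rpow. destruct (Req_EM_T (d x y) 0); auto.
  symmetry; apply Rpower_1. destruct Hm as [Hpos _]. specialize (Hpos x y). lra.
Qed.

Lemma betweenness_exponent_pos {X : Type} (d : X -> X -> R) (t : R) :
  is_metric d -> betweenness_exponent d (Some t) -> 0 < t.
Proof.
  intros Hm [Hub _]. pose proof (Hub 1 (metric_exponent_one d Hm)). lra.
Qed.

Lemma exp_factor_ge_1 {X : Type} (d : X -> X -> R) (t0 : option R) :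
  is_metric d -> betweenness_exponent d t0 -> 1 <= exp_factor t0.
Proof.
  intros Hm Hb. destruct t0 as [t |]; simpl; [| lra].
  pose proof (betweenness_exponent_pos d t Hm Hb) as t_pos.
  rewrite <- (Rpower_O 2) by lra.
  apply Rle_Rpower; [lra | left; apply Rinv_0_lt_compat, t_pos].
Qed.

Lemma le_of_log_ratio_bound (x eps t : R) :
  0 < x -> 0 < eps -> 0 < t -> t * (ln x - ln eps) <= ln 2 -> x <= Rpower 2 (/ t) * eps.
Proof.
  intros x_pos He t_pos Hlog.
  assert (HL : ln x <= / t * ln 2 + ln eps).
  { apply (Rmult_le_reg_l t); [exact t_pos |].
    rewrite Rmult_plus_distr_l, <- Rmult_assoc, Rinv_r, Rmult_1_l by lra. lra. }
  rewrite <- (exp_ln x) by exact x_pos.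
  rewrite <- (exp_ln eps) at 1 by exact He.
  unfold Rpower; rewrite <- exp_plus.
  destruct HL as [Hlt | ->]; [left; apply exp_increasing, Hlt | right; reflexivity].
Qed.

Section ExponentBound.

Variables (X : Type) (d : X -> X -> R) (eps : R) (a b c : X).
Hypotheses (Hm : is_metric d) (He : 0 < eps)
  (Hac : d a c <= eps) (Hbc : d b c <= eps) (nab : a <> b).

Lemma dist_pos : 0 < d a b.
Proof.
  destruct Hm as [Hpos [Hzero _]].
  destruct (Hpos a b) as [H | H]; [exact H |].
  exfalso; apply nab, Hzero; symmetry; exact H.
Qed.

(* For an exponent t, d(a,b)^t <= 2 eps^t, i.e. t * ln (d(a,b)/eps) <= ln 2. *)
Lemma exponent_log_bound (t : R) :
  metric_exponents d t -> t * (ln (d a b) - ln eps) <= ln 2.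
Proof.
  intros [Ht [_ [_ [_ ptri]]]].
  destruct Hm as [Hpos [_ [Hsym _]]].
  pose proof dist_pos as Dpos.
  assert (Hpow : Rpower (d a b) t <= 2 * Rpower eps t).
  { specialize (ptri a c b). unfold powd in ptri. rewrite (Hsym c b) in ptri.
    unfold rpow at 1 in ptri. destruct (Req_EM_T (d a b) 0); [lra |].
    pose proof (rpow_le_Rpower (d a c) eps t (Hpos a c) Hac He Ht).
    pose proof (rpow_le_Rpower (d b c) eps t (Hpos b c) Hbc He Ht). lra. }
  assert (Hln : ln (Rpower (d a b) t) <= ln (2 * Rpower eps t)).
  { destruct Hpow as [Hlt | ->]; [| right; reflexivity].
    left; apply ln_increasing; [apply exp_pos | exact Hlt]. }
  rewrite ln_mult, !ln_Rpower in Hln by (unfold Rpower; lra || apply exp_pos).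
  lra.
Qed.

Lemma exponent_upper_bound :
  eps < d a b -> is_upper_bound (metric_exponents d) (ln 2 / (ln (d a b) - ln eps)).
Proof.
  intros far t Ht.
  assert (L_pos : 0 < ln (d a b) - ln eps) by (pose proof (ln_increasing _ _ He far); lra).
  apply (Rmult_le_reg_r (ln (d a b) - ln eps)); [exact L_pos |].
  replace (ln 2 / (ln (d a b) - ln eps) * (ln (d a b) - ln eps)) with (ln 2)
    by (field; lra).
  exact (exponent_log_bound t Ht).
Qed.

(* Two distinct points of a common eps-ball are at distance at most
   2^{1/t0} eps, where t0 is the betweenness exponent: when d(a,b) > eps,
   the cap on the exponents passes to their supremum t0 (and rules out
   t0 = infinity). *)
Lemma ball_pair_dist (t0 : option R) :
  betweenness_exponent d t0 -> d a b <= exp_factor t0 * eps.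
Proof.
  intros Hb.
  destruct (Rle_or_lt (d a b) eps) as [near | far].
  - pose proof (exp_factor_ge_1 d t0 Hm Hb). nra.
  - pose proof (exponent_upper_bound far) as Hub.
    destruct t0 as [t |]; simpl in Hb |- *.
    + apply le_of_log_ratio_bound;
        [exact dist_pos | exact He | exact (betweenness_exponent_pos d t Hm Hb) |].
      assert (L_pos : 0 < ln (d a b) - ln eps) by (pose proof (ln_increasing _ _ He far); lra).
      pose proof (Rmult_le_compat_r _ _ _ (Rlt_le _ _ L_pos) (proj2 Hb _ Hub)) as Ht.
      replace (ln 2 / (ln (d a b) - ln eps) * (ln (d a b) - ln eps)) with (ln 2)
        in Ht by (field; lra).
      lra.
    + exfalso; apply Hb. exists (ln 2 / (ln (d a b) - ln eps)); exact Hub.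
Qed.

End ExponentBound.

Theorem lemma2p6 (X : Type) (d : X -> X -> R) (W : X -> Prop)
    (t0 : option R) (eps : R) :
  is_metric d -> betweenness_exponent d t0 -> 0 < eps ->
  (* M*_{2^{1/t0} eps}(W) <= N^X_eps(W) *)
  csup_le_cmin (disting_cands d (exp_factor t0 * eps) W)
               (net_cands d eps W (fun _ => True)) /\
  (* N^X_eps(W) <= N_eps(W) *)
  cmin_le_cmin (net_cands d eps W (fun _ => True)) (net_cands d eps W W) /\
  (* N_eps(W) <= M^_eps(W) *)
  cmin_le_cmin (net_cands d eps W W) (maximal_disting d eps W) /\
  (* M^_eps(W) <= M*_eps(W) (including existence of a maximal set) *)
  cmin_le_csup (maximal_disting d eps W) (disting_cands d eps W).
Proof.
  intros Hm Hb He. split; [| split; [| split]].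
  - intros A C [AW AD] [_ Cnet].
    apply (disting_injects_into_net d eps (exp_factor t0 * eps) W); auto.
    intros a b c Hac Hbc nab. exact (ball_pair_dist X d eps a b c Hm He Hac Hbc nab t0 Hb).
  - intros C [_ Cnet]. exists C; split; [split; [intros x _; exact I | exact Cnet] |].
    apply card_le_refl.
  - intros A HA. exists A; split; [| apply card_le_refl].
    split; [exact (proj1 HA) | exact (maximal_disting_net X d eps W A Hm (Rlt_le _ _ He) HA)].
  - destruct (maximal_disting_exists X d eps W) as [A HA]. exists A; split; [exact HA |].
    intros Z HZ. apply HZ. split; [exact (proj1 HA) | exact (proj1 (proj2 HA))].
Qed.
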